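(* The function $F_2$ is given by the formula \begin{align*} F_2(z)=&\frac{1}{2}\frac{(1-\vert z\vert^2)^4}{\vert1-z\vert^2} +\frac{3}{2}\frac{(1-\vert z\vert^2)^5}{\vert1-z\vert^4} -\frac{3}{2}\frac{(1-\vert z\vert^2)^4}{\vert1-z\vert^4}\\ &+\frac{3}{2}\frac{(1-\vert z\vert^2)^6}{\vert1-z\vert^6} -\frac{3}{2}\frac{(1-\vert z\vert^2)^5}{\vert1-z\vert^6} +\frac{1}{2}\frac{(1-\vert z\vert^2)^7}{\vert1-z\vert^8}, \quad z\in\mathbb{D}. \end{align*}
   Context: Let $\mathbb{D}$ be the unit disc, $\mathbb{T}=\partial\mathbb{D}$ the unit circle, $\Delta=\partial^2/\partial z\partial\bar z$, and for $\gamma>-1$ let $w_\gamma(z)=(1-\lvert z\rvert^2)^\gamma$, $z\in\mathbb{D}$. For a smooth function $u$ in $\mathbb{D}$ write $u_r(e^{i\theta})=u(re^{i\theta})$ for $0\le r<1$. We say $u=f_0$ on $\mathbb{T}$ (with $f_0\in\mathcal{D}'(\mathbb{T})$) if $\lim_{r\to1}u_r=f_0$ in $\mathcal{D}'(\mathbb{T})$, and the inward normal derivative is $\partial_n u=\lim_{r\to1}(u_r-f_0)/(1-r)$ in $\mathcal{D}'(\mathbb{T})$ when the limit exists. The Poisson kernel $F_\gamma$ is the (unique) solution, in this distributional sense, of $\Delta w_\gamma^{-1}\Delta F_\gamma=0$ in $\mathbb{D}$, $F_\gamma=\delta_1$ on $\mathbb{T}$, $\partial_n F_\gamma=0$ on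 $\mathbb{T}$, where $\delta_1$ is the unit Dirac mass at $1\in\mathbb{T}$. Here $\gamma=2$. *)

From Stdlib Require Import Reals List.
From Coquelicot Require Import Coquelicot.
Open Scope R_scope.

(* Points of the plane: z = x + i y is represented by (x, y). *)
Definition in_disc (x y : R) : Prop := x ^ 2 + y ^ 2 < 1.

(* Iterated partial derivatives: true = d/dx, false = d/dy
   (the head of the list is the last derivative applied). *)
Fixpoint pd (l : list bool) (u : R -> R -> R) : R -> R -> R :=
  match l with
  | nil => u
  | b :: l' =>
      let v := pd l' u in
      if b then fun x y => Derive (fun t => v t y) x
      else fun x y => Derive (fun t => v x t) y
  end.

Definition smooth_in_disc (u : R -> R -> R) : Prop :=
  forall (l : list bool) (x y : R), in_disc x y ->
    ex_derive (fun t => pd l u t y) x /\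
    ex_derive (fun t => pd l u x t) y /\
    continuous (fun p : R * R => pd l u (fst p) (snd p)) (x, y).

(* Delta = d^2/(dz dzbar) = (1/4)(d_xx + d_yy). *)
Definition Delta (u : R -> R -> R) : R -> R -> R :=
  fun x y => / 4 * (pd (true :: true :: nil) u x y + pd (false :: false :: nil) u x y).

Definition w (gamma : R) (x y : R) : R := Rpower (1 - (x ^ 2 + y ^ 2)) gamma.

Definition test_fun (phi : R -> R) : Prop :=
  (forall n x, ex_derive_n phi n x) /\ (forall x, phi (x + 2 * PI) = phi x).

(* Pairing of u_r (u_r(e^{i theta}) = u(r e^{i theta})) with a test function,
   with respect to normalized arc length d theta / (2 pi) on T. *)
Definition pair_r (u : R -> R -> R) (r : R) (phi : R -> R) : R :=
  RInt (fun th => u (r * cos th) (r * sin th) * phi th) (- PI) PI / (2 * PI).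

(* The Dirac mass at 1 = e^{i 0}. *)
Definition delta1 (phi : R -> R) : R := phi 0.

(* u = delta_1 on T : u_r -> delta_1 in D'(T) as r -> 1. *)
Definition bv_delta1 (u : R -> R -> R) : Prop :=
  forall phi, test_fun phi ->
    filterlim (fun r => pair_r u r phi) (at_left 1) (locally (delta1 phi)).

(* d_n u = 0 on T : (u_r - delta_1)/(1 - r) -> 0 in D'(T). *)
Definition normal_deriv_zero (u : R -> R -> R) : Prop :=
  forall phi, test_fun phi ->
    filterlim (fun r => (pair_r u r phi - delta1 phi) / (1 - r))
      (at_left 1) (locally 0).

Definition is_poisson_kernel (gamma : R) (u : R -> R -> R) : Prop :=
  smooth_in_disc u /\
  (forall x y, in_disc x y ->
     Delta (fun a b => / w gamma a b * Delta u a b) x y = 0) /\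
  bv_delta1 u /\
  normal_deriv_zero u.

Definition F2_formula (x y : R) : R :=
  let s := 1 - (x ^ 2 + y ^ 2) in
  let d := (1 - x) ^ 2 + y ^ 2 in
  / 2 * (s ^ 4 / d) + 3 / 2 * (s ^ 5 / d ^ 2) - 3 / 2 * (s ^ 4 / d ^ 2)
  + 3 / 2 * (s ^ 6 / d ^ 3) - 3 / 2 * (s ^ 5 / d ^ 3) + / 2 * (s ^ 7 / d ^ 4).

(* F_2 is a polynomial in x, y, s = 1 - |z|^2 and 1/d, d = |1 - z|^2. This class is closed
   under d/dx and d/dy with explicit rules, so smoothness and Delta (w_2^{-1} Delta F_2) = 0
   reduce to identities between rational functions.
   On the circle of radius r, F_2 depends only on r and cos t. It differs from the Poisson
   kernel P_r by the t-derivative of sin t * g(r, cos t), so it has mean 1, and being even it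
   annihilates sin t. Pairing with phi therefore only sees phi(t) - phi(0) - phi'(0) sin t,
   which is O(t^2) = O(1 - cos t), and |F_2| (1 - cos t) <= C (1 - r)^2 P_r. So the pairing
   is phi(0) + O((1 - r)^2), which gives both boundary conditions. *)

From Pilot Require Import Defs.
From Stdlib Require Import Reals List Lra.
From Coquelicot Require Import Coquelicot.
Import ListNotations.
Open Scope R_scope.

Lemma continuous_pow_fun {U : UniformSpace} (f : U -> R) (p : U) (n : nat) :
  continuous f p -> continuous (fun q => f q ^ n) p.
Proof.
  intros Hf; induction n as [|n IH]; simpl.
  - apply continuous_const.
  - now apply (continuous_mult f).
Qed.

Lemma locally_lt_of_continuous {U : UniformSpace} (f : U -> R) (p : U) (m : R) :
  continuous f p -> f p < m -> locally p (fun q => f q < m).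
Proof. intros Hf Hp. apply (Hf (fun u => u < m)), open_lt, Hp. Qed.

Lemma sin_cos_pow2 t : sin t ^ 2 + cos t ^ 2 = 1.
Proof. rewrite <- (sin2_cos2 t). unfold Rsqr. ring. Qed.

Lemma is_derive_eq (f : R -> R) x l l' : is_derive f x l -> l = l' -> is_derive f x l'.
Proof. now intros H <-. Qed.

Lemma is_derive_sin_mul_comp_cos (g : R -> R) t l :
  is_derive g (cos t) l ->
  is_derive (fun t => sin t * g (cos t)) t (cos t * g (cos t) - (1 - cos t ^ 2) * l).
Proof.
  intros Hg. eapply is_derive_eq.
  - apply (is_derive_mult sin (fun t => g (cos t))).
    + apply is_derive_sin.
    + apply (is_derive_comp g cos); [exact Hg | apply is_derive_cos].
    + intros; apply Rmult_comm.
  - replace (1 - cos t ^ 2) with (sin t ^ 2) by (rewrite <- (sin_cos_pow2 t); ring).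
    unfold plus, scal, mult; simpl. unfold mult; simpl. ring.
Qed.

Lemma is_RInt_odd_zero (f : R -> R) a l :
  (forall t, f (- t) = - f t) -> is_RInt f (- a) a l -> l = 0.
Proof.
  intros Hodd Hf.
  assert (Hrev : is_RInt (fun t => opp (f (- t))) a (- a) l).
  { apply (is_RInt_comp_opp (V := R_NormedModule) f a (- a)).
    now rewrite Ropp_involutive. }
  apply (is_RInt_ext _ f) in Hrev; [| intros t _; rewrite Hodd; unfold opp; simpl; ring].
  pose proof (is_RInt_unique _ _ _ _ Hf) as E1.
  pose proof (is_RInt_unique _ _ _ _ (is_RInt_swap _ _ _ _ Hrev)) as E2.
  rewrite E1 in E2. change (l = - l) in E2. lra.
Qed.

Lemma sqr_le_one_minus_cos t : - PI <= t <= PI -> t ^ 2 <= 16 * (1 - cos t).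
Proof.
  assert (Hpos : forall t, 0 <= t <= PI -> t ^ 2 <= 16 * (1 - cos t)).
  { clear t. intros t Ht. pose proof PI_4. pose proof (pow2_ge_0 t).
    destruct (Rle_lt_dec t 2) as [Ht2 | Ht2].
    - (* cos t <= 1 - t^2/2 + t^4/24, from the alternating Taylor series *)
      destruct (pre_cos_bound t 0) as [_ Hc]; [lra | lra |].
      unfold cos_approx, cos_term in Hc. simpl in Hc.
      assert (t ^ 4 <= 4 * t ^ 2).
      { replace (t ^ 4) with (t ^ 2 * t ^ 2) by ring.
        apply Rmult_le_compat_r; [lra | nra]. }
      assert (cos t <= 1 - t ^ 2 / 2 + t ^ 4 / 24)
        by (eapply Rle_trans; [exact Hc | right; field]).
      lra.
    - assert (cos t <= 0) by (apply cos_le_0; lra). nra. }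
  intros Ht. destruct (Rle_lt_dec 0 t); [apply Hpos; lra|].
  replace (t ^ 2) with ((- t) ^ 2) by ring. rewrite <- (cos_neg t). apply Hpos; lra.
Qed.

Lemma abs_le_of_second_derive_bound (g g1 g2 : R -> R) a B :
  (forall x, is_derive g x (g1 x)) -> (forall x, is_derive g1 x (g2 x)) ->
  g 0 = 0 -> g1 0 = 0 -> (forall x, - a <= x <= a -> Rabs (g2 x) <= B) ->
  forall t, - a <= t <= a -> Rabs (g t) <= B * t ^ 2.
Proof.
  intros Hg Hg1 Hg0 Hg10 HB t Ht.
  assert (Hcont : forall (f df : R -> R), (forall x, is_derive f x (df x)) ->
            forall x, continuity_pt f x).
  { intros f df Hf x. apply continuity_pt_filterlim, (ex_derive_continuous f).
    eexists; apply Hf. }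
  destruct (MVT_gen g 0 t g1) as [c [Hc Ec]];
    [intros; apply Hg | intros; now apply (Hcont g g1)|].
  destruct (MVT_gen g1 0 c g2) as [e [He Ee]];
    [intros; apply Hg1 | intros; now apply (Hcont g1 g2)|].
  rewrite Hg0, Rminus_0_r in Ec. rewrite Hg10, Rminus_0_r in Ee.
  rewrite Ec, Ee, !Rminus_0_r.
  assert (Hct : Rabs c <= Rabs t /\ - a <= e <= a).
  { unfold Rmin, Rmax in *.
    destruct (Rle_dec 0 t), (Rle_dec 0 c); split;
      rewrite ?(Rabs_right c), ?(Rabs_left c), ?(Rabs_right t), ?(Rabs_left t) by lra; lra. }
  destruct Hct as [Hct He'].
  rewrite !Rabs_mult. specialize (HB e He').
  replace (t ^ 2) with (Rabs t * Rabs t) by (rewrite <- Rabs_mult, Rabs_right; [ring | nra]).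
  pose proof (Rabs_pos c). pose proof (Rabs_pos t). pose proof (Rabs_pos (g2 e)).
  rewrite <- Rmult_assoc. apply Rmult_le_compat; nra.
Qed.

Definition remainder1 (phi : R -> R) (t : R) : R := phi t - phi 0 - Derive phi 0 * sin t.

Lemma remainder1_bound (phi : R -> R) a : 0 <= a -> (forall n x, ex_derive_n phi n x) ->
  exists M, 0 <= M /\ forall t, - a <= t <= a -> Rabs (remainder1 phi t) <= M * t ^ 2.
Proof.
  intros Ha Hphi. set (a1 := Derive phi 0).
  assert (HD1 : forall x, is_derive phi x (Derive phi x))
    by (intros x; apply Derive_correct, (Hphi 1%nat x)).
  assert (HD2 : forall x, is_derive (Derive phi) x (Derive_n phi 2 x))
    by (intros x; apply Derive_correct, (Hphi 2%nat x)).
  destruct (continuity_ab_maj (fun x => Rabs (Derive_n phi 2 x)) (- a) a) as [xm [Hxm _]];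
    [lra| |].
  { intros x _. apply continuity_pt_filterlim, (continuous_Rabs_comp (Derive_n phi 2)).
    apply (ex_derive_continuous (Derive_n phi 2)), (Hphi 3%nat x). }
  exists (Rabs (Derive_n phi 2 xm) + Rabs a1).
  split; [pose proof (Rabs_pos a1); pose proof (Rabs_pos (Derive_n phi 2 xm)); lra|].
  apply (abs_le_of_second_derive_bound _ (fun x => Derive phi x - a1 * cos x)
           (fun x => Derive_n phi 2 x + a1 * sin x)).
  - intros x. unfold remainder1. fold a1. eapply is_derive_eq.
    + apply (is_derive_minus (fun x => phi x - phi 0)); [|apply is_derive_scal, is_derive_sin].
      apply (is_derive_minus phi); [apply HD1 | apply is_derive_const].
    + unfold minus, plus, opp, scal, zero; simpl. unfold mult; simpl. ring.
  - intros x. eapply is_derive_eq.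
    + apply (is_derive_minus (Derive phi)); [apply HD2 | apply is_derive_scal, is_derive_cos].
    + unfold minus, plus, opp, scal; simpl. unfold mult; simpl. ring.
  - unfold remainder1. rewrite sin_0. ring.
  - unfold a1. rewrite cos_0. ring.
  - intros x Hx. eapply Rle_trans; [apply Rabs_triang|].
    apply Rplus_le_compat; [now apply Hxm|].
    rewrite Rabs_mult. pose proof (SIN_bound x). pose proof (Rabs_pos a1).
    assert (Rabs (sin x) <= 1) by (apply Rabs_le; lra). nra.
Qed.

Lemma filterlim_at_left_of_linear_bound (f : R -> R) a l C delta :
  0 < delta -> 0 <= C -> (forall r, a - delta <= r < a -> Rabs (f r - l) <= C * (a - r)) ->
  filterlim f (at_left a) (locally l).
Proof.
  intros Hdelta HC Hb. apply filterlim_locally. intros eps.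
  pose proof (cond_pos eps) as Heps.
  assert (Hd : 0 < Rmin delta (eps / (C + 1)))
    by (apply Rmin_pos; [lra | apply Rdiv_lt_0_compat; lra]).
  exists (mkposreal _ Hd). intros r Hr Hlt. cbn in Hr.
  unfold ball in Hr |- *; simpl in Hr |- *.
  unfold AbsRing_ball, abs, minus, plus, opp in Hr |- *; simpl in Hr |- *.
  rewrite Rabs_left in Hr by lra.
  pose proof (Rmin_l delta (eps / (C + 1))). pose proof (Rmin_r delta (eps / (C + 1))).
  eapply Rle_lt_trans; [apply (Hb r); lra|].
  apply Rle_lt_trans with ((C + 1) * (a - r)); [nra|].
  apply (Rmult_lt_reg_r (/ (C + 1))); [apply Rinv_0_lt_compat; lra|].
  replace ((C + 1) * (a - r) * / (C + 1)) with (a - r) by (field; lra).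
  replace (eps * / (C + 1)) with (eps / (C + 1)) by reflexivity. lra.
Qed.

(** * Rational functions with poles at z = 1 *)

Definition s_xy (x y : R) : R := 1 - (x ^ 2 + y ^ 2).

Definition d_xy (x y : R) : R := (1 - x) ^ 2 + y ^ 2.

(* [Term c i j a b] stands for c x^i y^j s^a / d^b. *)
Record term := Term { coef : R; deg_x : nat; deg_y : nat; deg_s : nat; deg_d : nat }.

Definition term_eval (T : term) (x y : R) : R :=
  coef T * x ^ deg_x T * y ^ deg_y T * s_xy x y ^ deg_s T / d_xy x y ^ deg_d T.

Fixpoint sum_eval (L : list term) (x y : R) : R :=
  match L with
  | [] => 0
  | T :: L' => term_eval T x y + sum_eval L' x y
  end.

(* Product rule, with d_x s = -2x, d_y s = -2y, d_x d = -2(1 - x), d_y d = 2y; a [pred]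
   applied to a zero exponent is harmless, the coefficient [INR 0] vanishing. *)
Definition term_dx (T : term) : list term :=
  let (c, i, j, a, b) := T in
  [Term (c * INR i) (pred i) j a b; Term (-2 * c * INR a) (S i) j (pred a) b;
   Term (2 * c * INR b) i j a (S b); Term (-2 * c * INR b) (S i) j a (S b)].

Definition term_dy (T : term) : list term :=
  let (c, i, j, a, b) := T in
  [Term (c * INR j) i (pred j) a b; Term (-2 * c * INR a) i (S j) (pred a) b;
   Term (-2 * c * INR b) i (S j) a (S b)].

Definition sum_dx (L : list term) : list term := flat_map term_dx L.

Definition sum_dy (L : list term) : list term := flat_map term_dy L.

Fixpoint sum_pd (l : list bool) (L : list term) : list term :=
  match l with
  | [] => L
  | b :: l' => if b then sum_dx (sum_pd l' L) else sum_dy (sum_pd l' L)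
  end.

Lemma sum_eval_app L1 L2 x y : sum_eval (L1 ++ L2) x y = sum_eval L1 x y + sum_eval L2 x y.
Proof. induction L1 as [|T L IH]; simpl; [ring | rewrite IH; ring]. Qed.

Lemma is_derive_term_dx T x y : d_xy x y <> 0 ->
  is_derive (fun t => term_eval T t y) x (sum_eval (term_dx T) x y).
Proof.
  intros Hd. destruct T as [c i j a b]. unfold term_eval, sum_eval, term_dx; simpl.
  unfold s_xy at 1, d_xy at 1. auto_derive.
  - replace ((1 + - x) * ((1 + - x) * 1) + y * (y * 1)) with (d_xy x y)
      by (unfold d_xy; ring).
    now apply pow_nonzero.
  - replace ((1 + - x) * ((1 + - x) * 1) + y * (y * 1)) with (d_xy x y)
      by (unfold d_xy; ring).
    replace (1 + - (x * (x * 1) + y * (y * 1))) with (s_xy x y) by (unfold s_xy; ring).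
    unfold term_eval; cbn [coef deg_x deg_y deg_s deg_d].
    generalize (s_xy x y) (d_xy x y) Hd; intros s d Hd'.
    destruct i, a, b; simpl pred; simpl pow; simpl INR; field; auto using pow_nonzero.
Qed.

Lemma is_derive_term_dy T x y : d_xy x y <> 0 ->
  is_derive (fun t => term_eval T x t) y (sum_eval (term_dy T) x y).
Proof.
  intros Hd. destruct T as [c i j a b]. unfold term_eval, sum_eval, term_dy; simpl.
  unfold s_xy at 1, d_xy at 1. auto_derive.
  - replace ((1 - x) * ((1 - x) * 1) + y * (y * 1)) with (d_xy x y)
      by (unfold d_xy; ring).
    now apply pow_nonzero.
  - replace ((1 - x) * ((1 - x) * 1) + y * (y * 1)) with (d_xy x y)
      by (unfold d_xy; ring).
    replace (1 + - (x * (x * 1) + y * (y * 1))) with (s_xy x y) by (unfold s_xy; ring).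
    unfold term_eval; cbn [coef deg_x deg_y deg_s deg_d].
    generalize (s_xy x y) (d_xy x y) Hd; intros s d Hd'.
    destruct j, a, b; simpl pred; simpl pow; simpl INR; field; auto using pow_nonzero.
Qed.

Lemma is_derive_sum_dx L x y : d_xy x y <> 0 ->
  is_derive (fun t => sum_eval L t y) x (sum_eval (sum_dx L) x y).
Proof.
  intros Hd; induction L as [|T L IH]; simpl.
  - auto_derive; auto.
  - unfold sum_dx in *; simpl. rewrite sum_eval_app.
    apply (is_derive_plus (fun t => term_eval T t y)); [apply is_derive_term_dx|]; auto.
Qed.

Lemma is_derive_sum_dy L x y : d_xy x y <> 0 ->
  is_derive (fun t => sum_eval L x t) y (sum_eval (sum_dy L) x y).
Proof.
  intros Hd; induction L as [|T L IH]; simpl.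
  - auto_derive; auto.
  - unfold sum_dy in *; simpl. rewrite sum_eval_app.
    apply (is_derive_plus (fun t => term_eval T x t)); [apply is_derive_term_dy|]; auto.
Qed.

Lemma continuous_term_eval T x y : d_xy x y <> 0 ->
  continuous (fun p : R * R => term_eval T (fst p) (snd p)) (x, y).
Proof.
  intros Hd. destruct T as [c i j a b]; unfold term_eval; simpl.
  assert (Hx : continuous (fun p : R * R => fst p) (x, y)) by apply continuous_fst.
  assert (Hy : continuous (fun p : R * R => snd p) (x, y)) by apply continuous_snd.
  assert (Hs : continuous (fun p : R * R => s_xy (fst p) (snd p)) (x, y)).
  { apply (continuous_minus (fun _ => 1)); [apply continuous_const|].
    apply (continuous_plus (fun p : R * R => fst p ^ 2)); now apply continuous_pow_fun. }
  assert (Hd' : continuous (fun p : R * R => d_xy (fst p) (snd p)) (x, y)).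
  { apply (continuous_plus (fun p : R * R => (1 - fst p) ^ 2));
      apply continuous_pow_fun; auto.
    apply (continuous_minus (fun _ => 1)); [apply continuous_const | exact Hx]. }
  apply (continuous_mult (fun p : R * R => c * fst p ^ i * snd p ^ j * s_xy (fst p) (snd p) ^ a)).
  - apply (continuous_mult (fun p : R * R => c * fst p ^ i * snd p ^ j));
      [|now apply continuous_pow_fun].
    apply (continuous_mult (fun p : R * R => c * fst p ^ i)); [|now apply continuous_pow_fun].
    apply (continuous_mult (fun _ => c)); [apply continuous_const | now apply continuous_pow_fun].
  - apply (continuous_comp (fun p : R * R => d_xy (fst p) (snd p) ^ b) Rinv).
    + now apply continuous_pow_fun.
    + apply continuous_Rinv, pow_nonzero, Hd.
Qed.

Lemma continuous_sum_eval L x y : d_xy x y <> 0 ->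
  continuous (fun p : R * R => sum_eval L (fst p) (snd p)) (x, y).
Proof.
  intros Hd; induction L as [|T L IH]; simpl.
  - apply continuous_const.
  - apply (continuous_plus (fun p : R * R => term_eval T (fst p) (snd p))); auto.
    now apply continuous_term_eval.
Qed.

Lemma in_disc_locally x y : in_disc x y ->
  locally (x, y) (fun p : R * R => in_disc (fst p) (snd p)).
Proof.
  intros H; apply (locally_lt_of_continuous (fun p : R * R => fst p ^ 2 + snd p ^ 2) _ 1);
    [|exact H].
  apply (continuous_plus (fun p : R * R => fst p ^ 2));
    apply continuous_pow_fun; [apply continuous_fst | apply continuous_snd].
Qed.

Lemma in_disc_locally_x x y : in_disc x y -> locally x (fun t => in_disc t y).
Proof.
  intros H; apply (locally_lt_of_continuous (fun t => t ^ 2 + y ^ 2) _ 1); [|exact H].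
  apply (continuous_plus (fun t => t ^ 2));
    [apply continuous_pow_fun, continuous_id | apply continuous_const].
Qed.

Lemma in_disc_locally_y x y : in_disc x y -> locally y (fun t => in_disc x t).
Proof.
  intros H; apply (locally_lt_of_continuous (fun t => x ^ 2 + t ^ 2) _ 1); [|exact H].
  apply (continuous_plus (fun _ => x ^ 2));
    [apply continuous_const | apply continuous_pow_fun, continuous_id].
Qed.

Lemma in_disc_d_xy_neq0 x y : in_disc x y -> d_xy x y <> 0.
Proof. unfold in_disc, d_xy. intros H Hc. nra. Qed.

Lemma in_disc_s_xy_pos x y : in_disc x y -> 0 < s_xy x y.
Proof. unfold in_disc, s_xy. lra. Qed.

Definition agrees_on_disc (f : R -> R -> R) (L : list term) : Prop :=
  forall x y, in_disc x y -> f x y = sum_eval L x y.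

Lemma agrees_on_disc_pd f L l : agrees_on_disc f L -> agrees_on_disc (pd l f) (sum_pd l L).
Proof.
  intros HfL; induction l as [|[|] l IH]; simpl; intros x y Hxy; [now apply HfL | |].
  - rewrite (Derive_ext_loc _ (fun t => sum_eval (sum_pd l L) t y)).
    + apply is_derive_unique, is_derive_sum_dx, in_disc_d_xy_neq0, Hxy.
    + eapply filter_imp; [|apply in_disc_locally_x, Hxy]. intros t Ht. now apply IH.
  - rewrite (Derive_ext_loc _ (fun t => sum_eval (sum_pd l L) x t)).
    + apply is_derive_unique, is_derive_sum_dy, in_disc_d_xy_neq0, Hxy.
    + eapply filter_imp; [|apply in_disc_locally_y, Hxy]. intros t Ht. now apply IH.
Qed.

Lemma smooth_in_disc_of_agrees f L : agrees_on_disc f L -> smooth_in_disc f.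
Proof.
  intros HfL l x y Hxy. pose proof (agrees_on_disc_pd f L l HfL) as Hpd.
  pose proof (in_disc_d_xy_neq0 x y Hxy) as Hd.
  split; [|split].
  - apply (ex_derive_ext_loc (fun t => sum_eval (sum_pd l L) t y)).
    + eapply filter_imp; [|apply in_disc_locally_x, Hxy]. intros t Ht. now rewrite Hpd.
    + eexists; now apply is_derive_sum_dx.
  - apply (ex_derive_ext_loc (fun t => sum_eval (sum_pd l L) x t)).
    + eapply filter_imp; [|apply in_disc_locally_y, Hxy]. intros t Ht. now rewrite Hpd.
    + eexists; now apply is_derive_sum_dy.
  - apply (continuous_ext_loc _ (fun p : R * R => sum_eval (sum_pd l L) (fst p) (snd p))).
    + eapply filter_imp; [|apply in_disc_locally, Hxy]. intros p Hp. now rewrite Hpd.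
    + now apply continuous_sum_eval.
Qed.

Definition F2_terms : list term :=
  [Term (/ 2) 0 0 4 1; Term (3 / 2) 0 0 5 2; Term (- (3 / 2)) 0 0 4 2;
   Term (3 / 2) 0 0 6 3; Term (- (3 / 2)) 0 0 5 3; Term (/ 2) 0 0 7 4].

(* w_2^{-1} Delta F_2 = -12 Re (z / (1 - z)^5), over the denominator |1 - z|^10. *)
Definition F2_weighted_laplacian_terms : list term :=
  [Term 12 0 6 0 5; Term (-60) 2 4 0 5; Term 180 1 4 0 5; Term (-120) 0 4 0 5;
   Term (-60) 4 2 0 5; Term 120 3 2 0 5; Term (-120) 1 2 0 5; Term 60 0 2 0 5;
   Term 12 6 0 0 5; Term (-60) 5 0 0 5; Term 120 4 0 0 5; Term (-120) 3 0 0 5;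
   Term 60 2 0 0 5; Term (-12) 1 0 0 5].

Ltac expand_terms :=
  cbn [sum_pd sum_dx sum_dy flat_map term_dx term_dy app sum_eval];
  unfold term_eval; cbn [coef deg_x deg_y deg_s deg_d pred INR pow];
  unfold s_xy, d_xy in *.

Ltac field_nonzero H1 H2 :=
  field; repeat split; let Hc := fresh in intro Hc;
  first [apply H1; rewrite <- Hc; ring | apply H2; rewrite <- Hc; ring].

Lemma F2_formula_agrees : agrees_on_disc F2_formula F2_terms.
Proof.
  intros x y Hxy. pose proof (in_disc_d_xy_neq0 x y Hxy) as Hd.
  unfold F2_formula, F2_terms. expand_terms. field_nonzero Hd Hd.
Qed.

Lemma F2_weighted_laplacian x y : d_xy x y <> 0 -> s_xy x y <> 0 ->
  / s_xy x y ^ 2 * (/ 4 * (sum_eval (sum_pd [true; true] F2_terms) x y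
                          + sum_eval (sum_pd [false; false] F2_terms) x y))
  = sum_eval F2_weighted_laplacian_terms x y.
Proof.
  intros Hd Hs. unfold F2_terms, F2_weighted_laplacian_terms. expand_terms.
  field_nonzero Hd Hs.
Qed.

Lemma F2_weighted_laplacian_harmonic x y : d_xy x y <> 0 ->
  sum_eval (sum_pd [true; true] F2_weighted_laplacian_terms) x y
  + sum_eval (sum_pd [false; false] F2_weighted_laplacian_terms) x y = 0.
Proof.
  intros Hd. unfold F2_weighted_laplacian_terms. expand_terms. field_nonzero Hd Hd.
Qed.

(* [Defs.Delta]: the bare name [Delta] refers to the discriminant of [Reals]. *)
Lemma F2_pde x y : in_disc x y ->
  Defs.Delta (fun a b => / w 2 a b * Defs.Delta F2_formula a b) x y = 0.
Proof.
  assert (Hw : agrees_on_disc (fun a b => / w 2 a b * Defs.Delta F2_formula a b)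
                 F2_weighted_laplacian_terms).
  { intros a b Hab. unfold Defs.Delta.
    rewrite (agrees_on_disc_pd _ _ [true; true] F2_formula_agrees a b Hab),
      (agrees_on_disc_pd _ _ [false; false] F2_formula_agrees a b Hab).
    unfold w. replace 2 with (INR 2) by (simpl; ring).
    rewrite Rpower_pow by apply in_disc_s_xy_pos, Hab.
    apply F2_weighted_laplacian;
      [apply in_disc_d_xy_neq0 | apply Rgt_not_eq, in_disc_s_xy_pos]; exact Hab. }
  intros Hxy. unfold Defs.Delta at 1.
  rewrite (agrees_on_disc_pd _ _ [true; true] Hw x y Hxy),
    (agrees_on_disc_pd _ _ [false; false] Hw x y Hxy).
  rewrite F2_weighted_laplacian_harmonic by now apply in_disc_d_xy_neq0. ring.
Qed.

(** * F_2 on circles *)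

Definition polar_denom (r c : R) : R := 1 + r ^ 2 - 2 * r * c.

Definition poisson_polar (r c : R) : R := (1 - r ^ 2) / polar_denom r c.

Definition F2_polar (r c : R) : R :=
  let s := 1 - r ^ 2 in
  let d := polar_denom r c in
  / 2 * (s ^ 4 / d) + 3 / 2 * (s ^ 5 / d ^ 2) - 3 / 2 * (s ^ 4 / d ^ 2)
  + 3 / 2 * (s ^ 6 / d ^ 3) - 3 / 2 * (s ^ 5 / d ^ 3) + / 2 * (s ^ 7 / d ^ 4).

Lemma F2_formula_polar r t : F2_formula (r * cos t) (r * sin t) = F2_polar r (cos t).
Proof.
  pose proof (sin_cos_pow2 t) as E.
  assert (Es : 1 - ((r * cos t) ^ 2 + (r * sin t) ^ 2) = 1 - r ^ 2).
  { transitivity (1 - r ^ 2 * (sin t ^ 2 + cos t ^ 2)); [ring | rewrite E; ring]. }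
  assert (Ed : (1 - r * cos t) ^ 2 + (r * sin t) ^ 2 = polar_denom r (cos t)).
  { unfold polar_denom.
    transitivity (1 - 2 * r * cos t + r ^ 2 * (sin t ^ 2 + cos t ^ 2)); [ring | rewrite E; ring]. }
  unfold F2_formula, F2_polar. cbv zeta. now rewrite Es, Ed.
Qed.

Lemma polar_denom_ge r c : 0 <= r -> c <= 1 -> (1 - r) ^ 2 <= polar_denom r c.
Proof. unfold polar_denom. intros. nra. Qed.

Lemma polar_denom_pos r c : 0 <= r < 1 -> c <= 1 -> 0 < polar_denom r c.
Proof. intros Hr Hc. pose proof (polar_denom_ge r c). nra. Qed.

Lemma continuous_F2_polar_cos r t : 0 <= r < 1 -> continuous (fun t => F2_polar r (cos t)) t.
Proof.
  intros Hr. apply (ex_derive_continuous (fun t => F2_polar r (cos t))).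
  pose proof (polar_denom_pos r (cos t) Hr (proj2 (COS_bound t))) as Hd.
  unfold F2_polar, polar_denom in *. auto_derive.
  repeat split; repeat apply prod_neq_R0; lra.
Qed.

Definition poisson_primitive (r t : R) : R := t + 2 * atan (r * sin t / (1 - r * cos t)).

Lemma is_derive_poisson_primitive r t : 0 <= r < 1 ->
  is_derive (poisson_primitive r) t (poisson_polar r (cos t)).
Proof.
  intros Hr. pose proof (COS_bound t). pose proof (sin_cos_pow2 t) as E.
  assert (Hq : 0 < 1 - r * cos t) by nra.
  unfold poisson_primitive, poisson_polar, polar_denom. auto_derive; [lra|].
  replace (1 - r ^ 2) with (1 - r ^ 2 * (sin t ^ 2 + cos t ^ 2)) by (rewrite E; ring).
  replace (1 + r ^ 2 - 2 * r * cos t) with ((1 - r * cos t) ^ 2 + (r * sin t) ^ 2)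
    by (transitivity (1 - 2 * r * cos t + r ^ 2 * (sin t ^ 2 + cos t ^ 2));
        [ring | rewrite E; ring]).
  assert (0 < (1 - r * cos t) ^ 2 + (r * sin t) ^ 2) by nra.
  field. split; [lra|]. intro Hc. nra.
Qed.

Lemma poisson_primitive_increment r :
  poisson_primitive r PI - poisson_primitive r (- PI) = 2 * PI.
Proof.
  unfold poisson_primitive. rewrite sin_neg, cos_neg, sin_PI.
  replace (r * 0 / (1 - r * cos PI)) with 0 by (unfold Rdiv; ring).
  replace (r * - 0 / (1 - r * cos PI)) with 0 by (unfold Rdiv; ring).
  rewrite atan_0. ring.
Qed.

Lemma is_RInt_poisson_polar r : 0 <= r < 1 ->
  is_RInt (fun t => poisson_polar r (cos t)) (- PI) PI (2 * PI).
Proof.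
  intros Hr. rewrite <- (poisson_primitive_increment r).
  apply (is_RInt_derive (poisson_primitive r)).
  - intros t _. now apply is_derive_poisson_primitive.
  - intros t _. apply (ex_derive_continuous (fun t => poisson_polar r (cos t))).
    pose proof (polar_denom_pos r (cos t) Hr (proj2 (COS_bound t))) as Hd.
    unfold poisson_polar, polar_denom in *. auto_derive. lra.
Qed.

(* Found by an ansatz so that F2_polar - poisson_polar is the t-derivative of
   sin t * F2_corrector r (cos t). *)
Definition F2_corrector (r c : R) : R :=
  let p0 := 3 * r - 10 / 3 * r ^ 3 + 2 * r ^ 5 - 2 * r ^ 7 + / 3 * r ^ 9 in
  let p1 := -9 * r ^ 2 + 11 * r ^ 4 - 3 * r ^ 6 + r ^ 8 in
  let p2 := 22 / 3 * r ^ 3 - 12 * r ^ 5 + 6 * r ^ 7 - 4 / 3 * r ^ 9 in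
  (p0 + p1 * c + p2 * c ^ 2) / polar_denom r c ^ 3.

Definition F2_primitive (r t : R) : R := poisson_primitive r t + sin t * F2_corrector r (cos t).

Lemma is_derive_F2_primitive r t : 0 <= r < 1 ->
  is_derive (F2_primitive r) t (F2_polar r (cos t)).
Proof.
  intros Hr. pose proof (polar_denom_pos r (cos t) Hr (proj2 (COS_bound t))) as Hd.
  eapply is_derive_eq.
  - apply (is_derive_plus (poisson_primitive r)); [now apply is_derive_poisson_primitive|].
    apply is_derive_sin_mul_comp_cos.
    unfold F2_corrector, polar_denom in *. auto_derive; [|reflexivity].
    repeat split; repeat apply prod_neq_R0; lra.
  - unfold plus; simpl. unfold F2_polar, poisson_polar, F2_corrector, polar_denom in *.
    field. lra.
Qed.

Lemma is_RInt_F2_polar r : 0 <= r < 1 ->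
  is_RInt (fun t => F2_polar r (cos t)) (- PI) PI (2 * PI).
Proof.
  intros Hr.
  replace (2 * PI) with (F2_primitive r PI - F2_primitive r (- PI)).
  - apply (is_RInt_derive (F2_primitive r)).
    + intros t _. now apply is_derive_F2_primitive.
    + intros t _. now apply continuous_F2_polar_cos.
  - rewrite <- (poisson_primitive_increment r). unfold F2_primitive.
    rewrite sin_neg, sin_PI. ring.
Qed.

(** * Boundary behaviour *)

Section PolarWeight.

(* Read e = 1 - r, s = 1 - r^2, d = |1 - r e^{it}|^2 and c = cos t. *)
Variables (e s d c : R).
Hypotheses (He : 0 < e <= 1) (Hs : 0 <= s <= 2 * e) (Hd : e ^ 2 <= d) (Hc : 0 <= 1 - c <= d).

Lemma pow_div_pow_mul_le n k :
  s ^ (3 + 2 * n + k) / d ^ (n + 2) * (1 - c) <= 2 ^ (3 + 2 * n + k) * e ^ 3 / d.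
Proof.
  assert (Hd0 : 0 < d) by nra.
  assert (Hs_pow : s ^ (3 + 2 * n + k) <= 2 ^ (3 + 2 * n + k) * e ^ 3 * d ^ n).
  { assert (E : (2 * e) ^ (3 + 2 * n + k) = 2 ^ (3 + 2 * n + k) * (e ^ 3 * (e ^ 2) ^ n * e ^ k))
      by (rewrite Rpow_mult_distr, !pow_add, !pow_mult; ring).
    assert (Hek : e ^ k <= 1) by (rewrite <- (pow1 k); apply pow_incr; lra).
    assert (Hen : (e ^ 2) ^ n <= d ^ n) by (apply pow_incr; split; [nra | exact Hd]).
    pose proof (pow_le e 3 ltac:(lra)). pose proof (pow_le (e ^ 2) n ltac:(nra)).
    apply Rle_trans with ((2 * e) ^ (3 + 2 * n + k)); [apply pow_incr; lra|].
    rewrite E, (Rmult_assoc _ (e ^ 3) (d ^ n)). apply Rmult_le_compat_l; [apply pow_le; lra|].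
    apply Rle_trans with (e ^ 3 * (e ^ 2) ^ n); [|apply Rmult_le_compat_l; lra].
    rewrite <- (Rmult_1_r (e ^ 3 * (e ^ 2) ^ n)) at 2.
    apply Rmult_le_compat_l; [apply Rmult_le_pos|]; lra. }
  apply (Rmult_le_reg_r (d ^ (n + 2))); [apply pow_lt; lra|].
  replace (s ^ (3 + 2 * n + k) / d ^ (n + 2) * (1 - c) * d ^ (n + 2))
    with (s ^ (3 + 2 * n + k) * (1 - c)) by (field; apply pow_nonzero; lra).
  replace (2 ^ (3 + 2 * n + k) * e ^ 3 / d * d ^ (n + 2))
    with (2 ^ (3 + 2 * n + k) * e ^ 3 * d ^ n * d) by (rewrite (pow_add d n 2); field; lra).
  apply Rmult_le_compat; [apply pow_le; lra | lra | exact Hs_pow | lra].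
Qed.

End PolarWeight.

Lemma F2_polar_weighted_le r c : / 2 <= r < 1 -> -1 <= c <= 1 ->
  Rabs (F2_polar r c) * (1 - c) <= 296 * (1 - r) ^ 2 * poisson_polar r c.
Proof.
  intros Hr Hc.
  set (e := 1 - r). set (s := 1 - r ^ 2). set (d := polar_denom r c).
  assert (He : 0 < e <= 1) by (unfold e; lra).
  assert (Hs : 0 <= s <= 2 * e) by (unfold s, e; nra).
  assert (Hd : e ^ 2 <= d) by (apply polar_denom_ge; lra).
  assert (Hcd : 0 <= 1 - c <= d) by (unfold d, polar_denom; nra).
  assert (Hd0 : 0 < d) by nra.
  assert (Pos : forall a b, 0 <= s ^ a / d ^ b * (1 - c)).
  { intros a b. apply Rmult_le_pos; [|lra]. unfold Rdiv. apply Rmult_le_pos.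
    - apply pow_le; lra.
    - left; apply Rinv_0_lt_compat, pow_lt; lra. }
  assert (T41 : s ^ 4 / d ^ 1 * (1 - c) <= 2 ^ 5 * e ^ 3 / d).
  { replace (s ^ 4 / d ^ 1 * (1 - c)) with (s ^ 4 * (1 - c) / d) by (field; lra).
    apply Rmult_le_compat_r; [left; apply Rinv_0_lt_compat; lra|].
    assert (s ^ 4 <= 2 ^ 4 * e ^ 4) by (rewrite <- Rpow_mult_distr; apply pow_incr; lra).
    assert (e ^ 4 <= e ^ 3) by (simpl; nra).
    pose proof (pow_le e 3 ltac:(lra)). pose proof (pow_le s 4 ltac:(lra)).
    apply Rle_trans with (2 ^ 4 * e ^ 4 * 2); [apply Rmult_le_compat; lra | simpl in *; nra]. }
  pose proof (pow_div_pow_mul_le e s d c He Hs Hd Hcd 0 2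
              : s ^ 5 / d ^ 2 * (1 - c) <= 2 ^ 5 * e ^ 3 / d).
  pose proof (pow_div_pow_mul_le e s d c He Hs Hd Hcd 0 1
              : s ^ 4 / d ^ 2 * (1 - c) <= 2 ^ 4 * e ^ 3 / d).
  pose proof (pow_div_pow_mul_le e s d c He Hs Hd Hcd 1 1
              : s ^ 6 / d ^ 3 * (1 - c) <= 2 ^ 6 * e ^ 3 / d).
  pose proof (pow_div_pow_mul_le e s d c He Hs Hd Hcd 1 0
              : s ^ 5 / d ^ 3 * (1 - c) <= 2 ^ 5 * e ^ 3 / d).
  pose proof (pow_div_pow_mul_le e s d c He Hs Hd Hcd 2 0
              : s ^ 7 / d ^ 4 * (1 - c) <= 2 ^ 7 * e ^ 3 / d).
  pose proof (Pos 4%nat 1%nat). pose proof (Pos 5%nat 2%nat). pose proof (Pos 4%nat 2%nat).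
  pose proof (Pos 6%nat 3%nat). pose proof (Pos 5%nat 3%nat). pose proof (Pos 7%nat 4%nat).
  assert (Hsplit : F2_polar r c * (1 - c) =
     / 2 * (s ^ 4 / d ^ 1 * (1 - c)) + 3 / 2 * (s ^ 5 / d ^ 2 * (1 - c))
     - 3 / 2 * (s ^ 4 / d ^ 2 * (1 - c)) + 3 / 2 * (s ^ 6 / d ^ 3 * (1 - c))
     - 3 / 2 * (s ^ 5 / d ^ 3 * (1 - c)) + / 2 * (s ^ 7 / d ^ 4 * (1 - c))).
  { unfold F2_polar. fold s d. field. lra. }
  assert (Habs : Rabs (F2_polar r c * (1 - c)) <= 296 * (e ^ 3 / d)).
  { rewrite Hsplit. apply Rabs_le. unfold Rdiv in *. simpl pow in *. split; lra. }
  rewrite <- (Rabs_right (1 - c)), <- Rabs_mult by lra.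
  eapply Rle_trans; [exact Habs|].
  unfold poisson_polar. fold s d. fold e.
  replace (296 * (e ^ 3 / d)) with (296 * e ^ 2 * (e / d)) by (field; lra).
  apply Rmult_le_compat_l; [pose proof (pow2_ge_0 e); lra|].
  apply Rmult_le_compat_r; [left; apply Rinv_0_lt_compat; lra | unfold s, e; nra].
Qed.

Lemma ex_RInt_F2_polar_mul r (f : R -> R) : 0 <= r < 1 -> (forall t, continuous f t) ->
  ex_RInt (fun t => F2_polar r (cos t) * f t) (- PI) PI.
Proof.
  intros Hr Hf. apply (ex_RInt_continuous (V := R_CompleteNormedModule)). intros t _.
  apply (continuous_mult (fun t => F2_polar r (cos t))); [now apply continuous_F2_polar_cos|].
  apply Hf.
Qed.

Lemma continuous_remainder1 phi : test_fun phi -> forall t, continuous (remainder1 phi) t.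
Proof.
  intros [Hphi _] t. apply (ex_derive_continuous (remainder1 phi)).
  unfold remainder1. auto_derive. apply (Hphi 1%nat t).
Qed.

Lemma pair_r_F2_sub_delta1 phi r : test_fun phi -> 0 <= r < 1 ->
  pair_r F2_formula r phi - delta1 phi
  = RInt (fun t => F2_polar r (cos t) * remainder1 phi t) (- PI) PI / (2 * PI).
Proof.
  intros Hphi Hr. set (a1 := Derive phi 0).
  pose proof (ex_RInt_F2_polar_mul r _ Hr (continuous_remainder1 phi Hphi)) as Hrem.
  assert (Isin : is_RInt (fun t => F2_polar r (cos t) * sin t) (- PI) PI 0).
  { assert (Hsin : ex_RInt (fun t => F2_polar r (cos t) * sin t) (- PI) PI).
    { apply ex_RInt_F2_polar_mul; [exact Hr|].
      intros t. apply (ex_derive_continuous sin). auto_derive. exact I. }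
    assert (Hodd : forall t, F2_polar r (cos (- t)) * sin (- t) = - (F2_polar r (cos t) * sin t))
      by (intros t; rewrite cos_neg, sin_neg; ring).
    pose proof (RInt_correct _ _ _ Hsin) as H.
    now rewrite (is_RInt_odd_zero _ PI _ Hodd H) in H. }
  assert (Itot : is_RInt (fun t => F2_polar r (cos t) * phi t) (- PI) PI
                   (RInt (fun t => F2_polar r (cos t) * remainder1 phi t) (- PI) PI
                    + (phi 0 * (2 * PI) + a1 * 0))).
  { pose proof (is_RInt_scal _ _ _ (phi 0) _ (is_RInt_F2_polar r Hr)) as I1.
    pose proof (is_RInt_scal _ _ _ a1 _ Isin) as I2.
    pose proof (is_RInt_plus _ _ _ _ _ _ (RInt_correct _ _ _ Hrem)
                  (is_RInt_plus _ _ _ _ _ _ I1 I2)) as I3.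
    eapply is_RInt_ext; [|exact I3].
    intros t _. unfold remainder1, plus, scal; simpl. unfold mult; simpl. fold a1. ring. }
  unfold pair_r, delta1.
  rewrite (RInt_ext _ (fun t => F2_polar r (cos t) * phi t))
    by (intros t _; now rewrite F2_formula_polar).
  rewrite (is_RInt_unique _ _ _ _ Itot). pose proof PI_RGT_0. field. lra.
Qed.

Lemma abs_RInt_F2_polar_mul_le (psi : R -> R) r M : / 2 <= r < 1 -> 0 <= M ->
  (forall t, continuous psi t) -> (forall t, - PI <= t <= PI -> Rabs (psi t) <= M * t ^ 2) ->
  Rabs (RInt (fun t => F2_polar r (cos t) * psi t) (- PI) PI)
  <= 16 * M * 296 * (1 - r) ^ 2 * (2 * PI).
Proof.
  intros Hr HM Hcont Hpsi. pose proof PI_RGT_0.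
  assert (Hr0 : 0 <= r < 1) by lra.
  pose proof (ex_RInt_F2_polar_mul r psi Hr0 Hcont) as Hex.
  set (K := 16 * M * 296 * (1 - r) ^ 2).
  assert (Ih : is_RInt (fun t => K * poisson_polar r (cos t)) (- PI) PI (K * (2 * PI)))
    by exact (is_RInt_scal _ _ _ K _ (is_RInt_poisson_polar r Hr0)).
  eapply Rle_trans; [apply abs_RInt_le; [lra | exact Hex]|].
  rewrite <- (is_RInt_unique _ _ _ _ Ih).
  apply RInt_le; [lra | apply (ex_RInt_norm _), Hex | eexists; exact Ih |].
  intros t Ht. rewrite Rabs_mult.
  pose proof (COS_bound t) as Hc.
  pose proof (F2_polar_weighted_le r (cos t) Hr Hc).
  pose proof (sqr_le_one_minus_cos t ltac:(lra)).
  pose proof (Rabs_pos (F2_polar r (cos t))).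
  apply Rle_trans with (Rabs (F2_polar r (cos t)) * (16 * M * (1 - cos t))).
  - apply Rmult_le_compat_l; [lra|]. eapply Rle_trans; [apply Hpsi; lra | nra].
  - unfold K. nra.
Qed.

Lemma pair_r_F2_sub_delta1_le phi : test_fun phi ->
  exists C, 0 <= C /\ forall r, / 2 <= r < 1 ->
    Rabs (pair_r F2_formula r phi - delta1 phi) <= C * (1 - r) ^ 2.
Proof.
  intros Hphi. pose proof PI_RGT_0.
  destruct (remainder1_bound phi PI ltac:(lra) (proj1 Hphi)) as [M [HM Hrem]].
  exists (16 * M * 296). split; [lra|]. intros r Hr.
  rewrite pair_r_F2_sub_delta1 by (auto; lra).
  unfold Rdiv. rewrite Rabs_mult, (Rabs_right (/ (2 * PI)))
    by (left; apply Rinv_0_lt_compat; lra).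
  apply (Rmult_le_reg_r (2 * PI)); [lra|].
  rewrite Rmult_assoc, Rinv_l, Rmult_1_r by lra.
  apply abs_RInt_F2_polar_mul_le; auto using continuous_remainder1.
Qed.

Lemma F2_bv_delta1 : bv_delta1 F2_formula.
Proof.
  intros phi Hphi. destruct (pair_r_F2_sub_delta1_le phi Hphi) as [C [HC Hb]].
  apply (filterlim_at_left_of_linear_bound _ 1 _ C (/ 2)); [lra | exact HC|].
  intros r Hr. eapply Rle_trans; [apply Hb; lra|].
  apply Rmult_le_compat_l; [exact HC | nra].
Qed.

Lemma F2_normal_deriv_zero : normal_deriv_zero F2_formula.
Proof.
  intros phi Hphi. destruct (pair_r_F2_sub_delta1_le phi Hphi) as [C [HC Hb]].
  apply (filterlim_at_left_of_linear_bound _ 1 _ C (/ 2)); [lra | exact HC|].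
  intros r Hr. rewrite Rminus_0_r.
  unfold Rdiv. rewrite Rabs_mult, (Rabs_right (/ (1 - r)))
    by (left; apply Rinv_0_lt_compat; lra).
  apply (Rmult_le_reg_r (1 - r)); [lra|].
  rewrite Rmult_assoc, Rinv_l, Rmult_1_r by lra.
  eapply Rle_trans; [apply Hb; lra | right; ring].
Qed.

Lemma F2_is_poisson_kernel : is_poisson_kernel 2 F2_formula.
Proof.
  exact (conj (smooth_in_disc_of_agrees _ _ F2_formula_agrees)
           (conj F2_pde (conj F2_bv_delta1 F2_normal_deriv_zero))).
Qed.

Theorem theorem3p2 :
  (forall u v : R -> R -> R,
     is_poisson_kernel 2 u -> is_poisson_kernel 2 v ->
     forall x y, in_disc x y -> u x y = v x y) ->
  is_poisson_kernel 2 F2_formula /\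
  (forall u : R -> R -> R, is_poisson_kernel 2 u ->
     forall x y, in_disc x y -> u x y = F2_formula x y).
Proof.
  intros Huniq. split; [exact F2_is_poisson_kernel|].
  intros u Hu x y Hxy. exact (Huniq u F2_formula Hu F2_is_poisson_kernel x y Hxy).
Qed.
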